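(* Let $f\in\mathcal{F}_3$ and $\mathbf{x}\in[0,1]^3$. If $f(1,2)+f(1,3)+f(2,3)\ge1+f(1)+f(2)+f(3)$, there exists an optimal solution $\theta$ of the linear program defining $f^{++}(\mathbf{x})$ with $\theta(\{1,2,3\})\le x_1x_2x_3$ (hence $\theta$ is negatively cylinder dependent: $\sum_{S\supseteq T}\theta(S)\le\prod_{i\in T}x_i$ for all nonempty $T\subseteq[3]$). Otherwise, there exists an optimal solution $\theta$ with $\theta(\{1,2,3\})\ge x_1x_2x_3$ (positively cylinder dependent: $\sum_{S\supseteq T}\theta(S)\ge\prod_{i\in T}x_i$ for all nonempty $T\subseteq[3]$).
   Context: $[n]=\{1,\dots,n\}$. A set function $f:2^{[n]}\to\mathbb{R}_+$ is monotone if $f(S)\le f(T)$ for $S\subseteq T$, submodular if $f(S)+f(T)\ge f(S\cap T)+f(S\cup T)$. $\mathcal{F}_n$ is the set of monotone submodular $f:2^{[n]}\to\mathbb{R}_+$ with $f(\emptyset)=0$, $f([n])=1$. Write $f(i)=f(\{i\})$, $f(i,j)=f(\{i,j\})$. For $\mathbf{x}\in[0,1]^n$, $f^{++}(\mathbf{x})$ is the optimal value of the linear program: maximize $\sum_{S\subseteq[n]}\theta(S)f(S)$ over $\theta:2^{[n]}\to\mathbb{R}_{\ge0}$ with $\sum_S\theta(S)=1$, $\sum_{S\ni i}\theta(S)=x_i$ for all $i$, and $\sum_{S\ni i,j}\theta(S)=x_ix_j$ for all $i<j$. *)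

From HB Require Import structures.
From mathcomp Require Import all_boot all_order all_algebra.
From mathcomp Require Import reals.
Set Implicit Arguments. Unset Strict Implicit. Unset Printing Implicit Defensive.
Import Order.TTheory GRing.Theory Num.Theory.
Local Open Scope ring_scope.

(* Ground set [n] is represented by 'I_n = {0,...,n-1}; element k of the
   paper corresponds to ordinal k-1. *)

Definition monotone_set_fun (R : realType) (n : nat) (f : {set 'I_n} -> R) :=
  forall S T : {set 'I_n}, S \subset T -> f S <= f T.

Definition submodular_set_fun (R : realType) (n : nat) (f : {set 'I_n} -> R) :=
  forall S T : {set 'I_n}, f (S :&: T) + f (S :|: T) <= f S + f T.

Definition in_F (R : realType) (n : nat) (f : {set 'I_n} -> R) :=
  [/\ forall S, 0 <= f S, monotone_set_fun f, submodular_set_fun f,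
      f set0 = 0 & f setT = 1].

Definition lp_feasible (R : realType) (n : nat) (x : 'I_n -> R)
    (theta : {set 'I_n} -> R) :=
  [/\ forall S, 0 <= theta S,
      \sum_(S : {set 'I_n}) theta S = 1,
      forall i : 'I_n, \sum_(S : {set 'I_n} | i \in S) theta S = x i &
      forall i j : 'I_n, (i < j)%N ->
        \sum_(S : {set 'I_n} | (i \in S) && (j \in S)) theta S = x i * x j].

Definition lp_value (R : realType) (n : nat) (f : {set 'I_n} -> R)
    (theta : {set 'I_n} -> R) := \sum_(S : {set 'I_n}) theta S * f S.

Definition lp_optimal (R : realType) (n : nat) (f : {set 'I_n} -> R)
    (x : 'I_n -> R) (theta : {set 'I_n} -> R) :=
  lp_feasible x theta /\
  forall theta', lp_feasible x theta' -> lp_value f theta' <= lp_value f theta.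

Definition neg_cylinder_dep (R : realType) (n : nat) (x : 'I_n -> R)
    (theta : {set 'I_n} -> R) :=
  forall T : {set 'I_n}, T != set0 ->
    \sum_(S : {set 'I_n} | T \subset S) theta S <= \prod_(i in T) x i.

Definition pos_cylinder_dep (R : realType) (n : nat) (x : 'I_n -> R)
    (theta : {set 'I_n} -> R) :=
  forall T : {set 'I_n}, T != set0 ->
    \sum_(S : {set 'I_n} | T \subset S) theta S >= \prod_(i in T) x i.

Definition e1 : 'I_3 := @Ordinal 3 0 isT.
Definition e2 : 'I_3 := @Ordinal 3 1 isT.
Definition e3 : 'I_3 := @Ordinal 3 2 isT.

From HB Require Import structures.
From mathcomp Require Import all_boot all_order all_algebra.
From mathcomp Require Import reals.
From mathcomp Require Import ring lra.
Set Implicit Arguments. Unset Strict Implicit. Unset Printing Implicit Defensive.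
Import Order.TTheory GRing.Theory Num.Theory.
Local Open Scope ring_scope.

(* For n = 3 the marginal constraints determine theta(S) for every S except
   [3], by inclusion-exclusion from x_i and x_i x_j; so the feasible solutions
   form a one-parameter family indexed by t = theta([3]) ranging over an
   interval, on which the LP objective is affine in t with slope
   1 + f(1) + f(2) + f(3) - f(1,2) - f(1,3) - f(2,3).  An endpoint of the
   interval is therefore optimal: the lower one when the slope is <= 0, the
   upper one otherwise.  The product distribution (t = x1 x2 x3) is feasible,
   so the lower endpoint is <= x1 x2 x3 <= the upper one.  Finally, the
   cylinder sums over T <> [3] are the fixed products, so cylinder dependence
   only compares t with x1 x2 x3.  Only f(empty) = 0 and f([3]) = 1 are used. *)

Definition eq_e3 :=
  ((erefl : (e1 == e2) = false), (erefl : (e1 == e3) = false),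
   (erefl : (e2 == e3) = false), (erefl : (e2 == e1) = false),
   (erefl : (e3 == e1) = false), (erefl : (e3 == e2) = false)).

Lemma ord3P (i : 'I_3) : [\/ i = e1, i = e2 | i = e3].
Proof.
by case: i => [[|[|[|//]]] Hi]; [apply: Or31 | apply: Or32 | apply: Or33];
  apply/val_inj.
Qed.

Definition sets3 : seq {set 'I_3} :=
  [:: set0; [set e1]; [set e2]; [set e3];
      [set e1; e2]; [set e1; e3]; [set e2; e3]; setT].

Definition mem3 (S : {set 'I_3}) := (e1 \in S, e2 \in S, e3 \in S).

Lemma mem3_inj : injective mem3.
Proof.
by move=> S T [h1 h2 h3]; apply/setP => i; case: (ord3P i) => ->.
Qed.

Lemma mem_sets3 S : S \in sets3.
Proof.
rewrite -(mem_map mem3_inj) /mem3 /= !inE !eq_e3 /=.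
by case: (e1 \in S); case: (e2 \in S); case: (e3 \in S).
Qed.

Lemma sum_set3 (V : nmodType) (P : pred {set 'I_3}) (F : {set 'I_3} -> V) :
  \sum_(S | P S) F S =
    let G S := if P S then F S else 0 in
    G set0 + G [set e1] + G [set e2] + G [set e3]
    + G [set e1; e2] + G [set e1; e3] + G [set e2; e3] + G setT.
Proof.
have uniq_sets3 : uniq sets3.
  by rewrite -(map_inj_uniq mem3_inj) /mem3 /= !inE !eq_e3.
have enumE : perm_eq (enum {set 'I_3}) sets3.
  by apply: uniq_perm => [||S]; rewrite ?enum_uniq ?mem_enum ?mem_sets3.
rewrite big_mkcond -big_enum (perm_big _ enumE) /= !big_cons big_nil.
by rewrite addr0 !addrA.
Qed.

Lemma setT3 : [set: 'I_3] = [set e1; e2; e3].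
Proof. by apply/setP => i; rewrite !inE; case: (ord3P i) => ->; rewrite !eq_e3. Qed.

Lemma prod_set3 (R : comPzSemiRingType) (F : 'I_3 -> R) (T : {set 'I_3}) :
  \prod_(i in T) F i = (if e1 \in T then F e1 else 1)
    * (if e2 \in T then F e2 else 1) * (if e3 \in T then F e3 else 1).
Proof.
have enumE : perm_eq (enum 'I_3) [:: e1; e2; e3].
  apply: uniq_perm => [||i]; rewrite ?enum_uniq // mem_enum !inE.
  by case: (ord3P i) => ->; rewrite !eq_e3.
rewrite big_mkcond -big_enum (perm_big _ enumE) /= !big_cons big_nil.
by rewrite mulr1 !mulrA.
Qed.

Section OneParameterFamily.

Variable R : realType.
Implicit Types (x : 'I_3 -> R) (f th : {set 'I_3} -> R) (t : R).

Definition theta_param x t (S : {set 'I_3}) : R :=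
  match e1 \in S, e2 \in S, e3 \in S with
  | false, false, false =>
      1 - x e1 - x e2 - x e3 + x e1 * x e2 + x e1 * x e3 + x e2 * x e3 - t
  | true, false, false => x e1 - x e1 * x e2 - x e1 * x e3 + t
  | false, true, false => x e2 - x e1 * x e2 - x e2 * x e3 + t
  | false, false, true => x e3 - x e1 * x e3 - x e2 * x e3 + t
  | true, true, false => x e1 * x e2 - t
  | true, false, true => x e1 * x e3 - t
  | false, true, true => x e2 * x e3 - t
  | true, true, true => t
  end.

Definition param_lower x :=
  Num.max 0 (Num.max (x e1 * x e2 + x e1 * x e3 - x e1)
    (Num.max (x e1 * x e2 + x e2 * x e3 - x e2)
             (x e1 * x e3 + x e2 * x e3 - x e3))).

Definition param_upper x :=
  Num.min (1 - x e1 - x e2 - x e3 + x e1 * x e2 + x e1 * x e3 + x e2 * x e3)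
    (Num.min (x e1 * x e2) (Num.min (x e1 * x e3) (x e2 * x e3))).

Definition lp_slope f :=
  f setT + f [set e1] + f [set e2] + f [set e3]
  - f set0 - f [set e1; e2] - f [set e1; e3] - f [set e2; e3].

Ltac eval_sets := rewrite /theta_param ?inE ?eq_e3 /=.

Lemma theta_param_setT x t : theta_param x t setT = t.
Proof. by eval_sets. Qed.

Lemma lp_feasibleE x th : lp_feasible x th ->
  forall S, th S = theta_param x (th setT) S.
Proof.
case=> _ hsum hmarg hpair.
have := hmarg e1; have := hmarg e2; have := hmarg e3.
have := hpair e1 e2 isT; have := hpair e1 e3 isT; have := hpair e2 e3 isT.
move: hsum; rewrite !sum_set3 /= !inE !eq_e3 /= !(add0r, addr0).
move=> ? ? ? ? ? ? ? S; move: (mem_sets3 S); rewrite !inE.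
by do ![case/orP=> [/eqP-> | ] | move/eqP->]; eval_sets; lra.
Qed.

Lemma lp_feasible_bounds x th : lp_feasible x th ->
  param_lower x <= th setT <= param_upper x.
Proof.
move=> feas; have ge0 S : 0 <= theta_param x (th setT) S.
  by rewrite -(lp_feasibleE feas); case: feas.
have := ge0 set0; have := ge0 [set e1]; have := ge0 [set e2];
have := ge0 [set e3]; have := ge0 [set e1; e2]; have := ge0 [set e1; e3];
have := ge0 [set e2; e3]; have := ge0 setT; eval_sets => *.
rewrite /param_lower /param_upper !ge_max !le_min.
by apply/andP; split; apply/and4P; split; lra.
Qed.

Lemma theta_param_feasible x t :
  param_lower x <= t <= param_upper x -> lp_feasible x (theta_param x t).
Proof.
rewrite /param_lower /param_upper !ge_max !le_min.
move=> /andP[/and4P[l0 l1 l2 l3] /and4P[u0 u1 u2 u3]]; split.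
- by move=> S; rewrite /theta_param;
    case: (e1 \in S); case: (e2 \in S); case: (e3 \in S); lra.
- by rewrite sum_set3; eval_sets; ring.
- by move=> i; rewrite sum_set3 /=; case: (ord3P i) => ->; eval_sets; ring.
- move=> i j; rewrite sum_set3 /=.
  by case: (ord3P i) => ->; case: (ord3P j) => -> //= _; eval_sets; ring.
Qed.

Lemma lp_value_param f x t :
  lp_value f (theta_param x t) = lp_value f (theta_param x 0) + t * lp_slope f.
Proof. by rewrite /lp_value /lp_slope !sum_set3; eval_sets; ring. Qed.

Lemma lp_value_feasible f x th : lp_feasible x th ->
  lp_value f th = lp_value f (theta_param x (th setT)).
Proof. by move=> /lp_feasibleE thE; apply: eq_bigr => S _; rewrite thE. Qed.

Lemma lp_optimal_param f x t :
  param_lower x <= t <= param_upper x ->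
  (forall t', param_lower x <= t' <= param_upper x ->
     t' * lp_slope f <= t * lp_slope f) ->
  lp_optimal f x (theta_param x t).
Proof.
move=> /theta_param_feasible feas best; split=> // th th_feas.
rewrite (lp_value_feasible f th_feas) (lp_value_param f x t).
rewrite (lp_value_param f x (th setT)) lerD2l.
exact/best/lp_feasible_bounds.
Qed.

Lemma lp_optimal_lower f x : lp_slope f <= 0 ->
  param_lower x <= param_upper x ->
  lp_optimal f x (theta_param x (param_lower x)).
Proof.
move=> slope_le0 lu; apply: lp_optimal_param => [|t' /andP[lt' _]].
  by rewrite lexx.
exact: ler_wnM2r.
Qed.

Lemma lp_optimal_upper f x : 0 <= lp_slope f ->
  param_lower x <= param_upper x ->
  lp_optimal f x (theta_param x (param_upper x)).
Proof.
move=> slope_ge0 lu; apply: lp_optimal_param => [|t' /andP[_ t'u]].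
  by rewrite lexx andbT.
exact: ler_wpM2r.
Qed.

Lemma param_range_prod x : (forall i, 0 <= x i <= 1) ->
  param_lower x <= x e1 * x e2 * x e3 <= param_upper x.
Proof.
move=> x01; have /andP[a1 b1] := x01 e1; have /andP[a2 b2] := x01 e2.
have /andP[a3 b3] := x01 e3.
have [n1 n2 n3] : [/\ 0 <= 1 - x e1, 0 <= 1 - x e2 & 0 <= 1 - x e3].
  by rewrite !subr_ge0.
(* each bound is the nonnegativity of one cell of the product distribution *)
have := mulr_ge0 (mulr_ge0 a1 a2) a3; have := mulr_ge0 (mulr_ge0 a1 n2) n3;
have := mulr_ge0 (mulr_ge0 a2 n1) n3; have := mulr_ge0 (mulr_ge0 a3 n1) n2;
have := mulr_ge0 (mulr_ge0 a1 a2) n3; have := mulr_ge0 (mulr_ge0 a1 a3) n2;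
have := mulr_ge0 (mulr_ge0 a2 a3) n1; have := mulr_ge0 (mulr_ge0 n1 n2) n3.
rewrite /param_lower /param_upper !ge_max !le_min => *.
by apply/andP; split; apply/and4P; split; lra.
Qed.

Lemma cylinder_sum_param x t (T : {set 'I_3}) : T != set0 -> T != setT ->
  \sum_(S : {set 'I_3} | T \subset S) theta_param x t S = \prod_(i in T) x i.
Proof.
move: (mem_sets3 T); rewrite !inE.
do ![case/orP => [/eqP-> | ] | move/eqP->]; rewrite ?eqxx // => _ _;
  rewrite sum_set3 prod_set3 /= setT3 ?subUset ?sub1set; eval_sets; ring.
Qed.

Lemma cylinder_sum_paramT x t :
  \sum_(S : {set 'I_3} | setT \subset S) theta_param x t S = t.
Proof. by rewrite sum_set3 /= setT3 ?subUset ?sub1set; eval_sets; ring. Qed.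

Lemma prod_setT3 x : \prod_(i in [set: 'I_3]) x i = x e1 * x e2 * x e3.
Proof. by rewrite prod_set3 !inE. Qed.

Lemma neg_cylinder_dep_param x t : t <= x e1 * x e2 * x e3 ->
  neg_cylinder_dep x (theta_param x t).
Proof.
move=> t_le T T0; have [->|TT] := eqVneq T setT.
  by rewrite cylinder_sum_paramT prod_setT3.
by rewrite cylinder_sum_param.
Qed.

Lemma pos_cylinder_dep_param x t : x e1 * x e2 * x e3 <= t ->
  pos_cylinder_dep x (theta_param x t).
Proof.
move=> le_t T T0; have [->|TT] := eqVneq T setT.
  by rewrite cylinder_sum_paramT prod_setT3.
by rewrite cylinder_sum_param.
Qed.

End OneParameterFamily.

Theorem mainTheorem8 (R : realType) (f : {set 'I_3} -> R) (x : 'I_3 -> R) :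
  in_F f ->
  (forall i, 0 <= x i <= 1) ->
  (f [set e1; e2] + f [set e1; e3] + f [set e2; e3]
     >= 1 + f [set e1] + f [set e2] + f [set e3] ->
   exists theta : {set 'I_3} -> R,
     [/\ lp_optimal f x theta, theta setT <= x e1 * x e2 * x e3
       & neg_cylinder_dep x theta]) /\
  (~ (f [set e1; e2] + f [set e1; e3] + f [set e2; e3]
       >= 1 + f [set e1] + f [set e2] + f [set e3]) ->
   exists theta : {set 'I_3} -> R,
     [/\ lp_optimal f x theta, theta setT >= x e1 * x e2 * x e3
       & pos_cylinder_dep x theta]).
Proof.
move=> [_ _ _ f0 fT] x01.
have /andP[lower_le upper_ge] := param_range_prod x01.
have lu := le_trans lower_le upper_ge.
have slopeE : lp_slope f = 1 + f [set e1] + f [set e2] + f [set e3]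
    - (f [set e1; e2] + f [set e1; e3] + f [set e2; e3]).
  by rewrite /lp_slope f0 fT; ring.
split=> [slope_le0 | /negP]; [|rewrite -ltNge => slope_gt0].
- exists (theta_param x (param_lower x)); split.
  + by apply: lp_optimal_lower => //; rewrite slopeE subr_le0.
  + by rewrite theta_param_setT.
  + exact: neg_cylinder_dep_param.
- exists (theta_param x (param_upper x)); split.
  + by apply: lp_optimal_upper => //; rewrite slopeE subr_ge0 ltW.
  + by rewrite theta_param_setT.
  + exact: pos_cylinder_dep_param.
Qed.
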